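(* Let $\epsilon$ be a sequence to which Algorithm A (described below) is applied. Suppose that at some step of the algorithm the current sequence has an occurrence of $p$ or of $q$ at position $i$. Then among the entries of the current sequence in positions $i,i+1,i+2,i+3$, only those in positions $i$ and $i+2$ can have been changed from the original sequence $\epsilon$.
   Context: The reduction of an integer word replaces each occurrence of its $k$-th smallest distinct value by $k-1$; a consecutive pattern $\underline{p_1p_2p_3p_4}$ occurs in a sequence at position $i$ if the reduction of its entries in positions $i,\dots,i+3$ equals $p_1p_2p_3p_4$. Let $p=\underline{0102}$ and $q=\underline{0112}$. Algorithm A, on input an integer sequence $\mathrm{seq}=\epsilon_1\cdots\epsilon_n$: let $E_p$, $E_q$ be the sets of positions of occurrences of $p$, resp. $q$, in the input sequence; set $\mathrm{last}:=$ null. For $i=1,2,\dots,n$ in order: let $N_p,N_q$ be the sets of positions of occurrences of $p$, resp. $q$, in the current sequence. If $i-2\in E_p$: set $\mathrm{last}:=\mathrm{seq}[i]$ and $\mathrm{seq}[i]:=\mathrm{seq}[i-1]$. Else if $i-2\in E_q$: set $\mathrm{last}:=\mathrm{seq}[i]$ and $\mathrm{seq}[i]:=\mathrm{seq}[i-2]$. Else if $i-2\in N_p$ or $i-2\in N_q$: swap the values of $\mathrm{seq}[i]$ and $\mathrm{last}$. Output $\mathrm{seq}$. *)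

From mathcomp Require Import all_boot all_order all_algebra.
Set Implicit Arguments. Unset Strict Implicit. Unset Printing Implicit Defensive.
Import Order.TTheory GRing.Theory Num.Theory.
Local Open Scope ring_scope.

(* Reduction of an integer word: each entry x is replaced by the number of
   distinct values of the word strictly smaller than x (= k-1 for the k-th
   smallest distinct value). *)
Definition red (w : seq int) : seq nat :=
  [seq size (undup [seq y <- w | y < x]) | x <- w].

Definition occurs (pat : seq nat) (s : seq int) (i : nat) : bool :=
  red (take (size pat) (drop i s)) == pat.

Definition pat_p : seq nat := [:: 0; 1; 0; 2]%N.
Definition pat_q : seq nat := [:: 0; 1; 1; 2]%N.

(* One step of Algorithm A (0-based index i, "position i-2" is i-2 with i>=2).
   State = (current sequence, last) with last = None meaning null. *)
Definition stepA (e : seq int) (st : seq int * option int) (i : nat)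
  : seq int * option int :=
  let: (s, last) := st in
  if (2 <= i)%N && occurs pat_p e (i - 2) then
    (set_nth 0 s i (nth 0 s i.-1), Some (nth 0 s i))
  else if (2 <= i)%N && occurs pat_q e (i - 2) then
    (set_nth 0 s i (nth 0 s (i - 2)), Some (nth 0 s i))
  else if (2 <= i)%N && (occurs pat_p s (i - 2) || occurs pat_q s (i - 2)) then
    (set_nth 0 s i (odflt (nth 0 s i) last), Some (nth 0 s i))
  else (s, last).

Definition stateA (e : seq int) (k : nat) : seq int * option int :=
  foldl (stepA e) (e, None) (iota 0 k).

(* Step m of Algorithm A changes at most entry m of the current word, and does
   so only when it fires, i.e. when p or q occurs at m-2 in the input or in the
   current word.  In both patterns the third entry is at most the second and
   below the fourth, and the second is below the fourth.  So a firing step m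
   sees e_m < e_(m+1), and by strong induction the value it writes is also
   below e_(m+1): it is copied from entry m-1 or m-2 of an input occurrence, or
   it is the entry e_(m-2) that the previous firing step saved in last.
   Hence two consecutive steps never fire, and an occurrence at j in a current
   word, whose third entry is at most its second, rules out that step j+1 or
   step j+3 fired. *)

From mathcomp Require Import all_boot all_order all_algebra.
From mathcomp Require Import zify.
Set Implicit Arguments. Unset Strict Implicit. Unset Printing Implicit Defensive.
Import Order.TTheory.

Section NumSmaller.
Local Open Scope order_scope.
Variables (disp : Order.disp_t) (T : orderType disp).
Implicit Types (w : seq T) (x y : T).

Definition num_smaller w x : nat := size (undup [seq z <- w | z < x]).

Lemma num_smaller_le w x y : x <= y -> (num_smaller w x <= num_smaller w y)%N.
Proof.
move=> le_xy; apply: uniq_leq_size; first exact: undup_uniq.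
move=> z; rewrite !mem_undup !mem_filter => /andP[lt_zx ->].
by rewrite (lt_le_trans lt_zx le_xy).
Qed.

Lemma num_smaller_lt w x y :
  x \in w -> x < y -> (num_smaller w x < num_smaller w y)%N.
Proof.
move=> xw lt_xy.
have /uniq_leq_size: uniq (x :: undup [seq z <- w | z < x]).
  by rewrite /= undup_uniq mem_undup mem_filter ltxx.
apply=> z; rewrite inE !mem_undup !mem_filter => /orP[/eqP->|/andP[lt_zx ->]].
  by rewrite lt_xy xw.
by rewrite (lt_trans lt_zx lt_xy).
Qed.

End NumSmaller.

Local Open Scope ring_scope.

Lemma nth_red w i :
  (i < size w)%N -> nth 0%N (red w) i = num_smaller w (nth 0 w i).
Proof. exact: nth_map. Qed.

Lemma lt_nth_red w i1 i2 : (i1 < size w)%N -> (i2 < size w)%N ->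
  (nth 0%N (red w) i1 < nth 0%N (red w) i2)%N -> nth 0 w i1 < nth 0 w i2.
Proof.
move=> lt_i1 lt_i2; rewrite !nth_red //.
by case: ltP => // le21; rewrite ltnNge num_smaller_le.
Qed.

Lemma eq_nth_red w i1 i2 : (i1 < size w)%N -> (i2 < size w)%N ->
  nth 0%N (red w) i1 = nth 0%N (red w) i2 -> nth 0 w i1 = nth 0 w i2.
Proof.
move=> lt_i1 lt_i2; rewrite !nth_red //.
case: (ltgtP (nth 0 w i1) (nth 0 w i2)) => // lt_i12; last move=> /esym.
all: by move/eqP; rewrite ltn_eqF // num_smaller_lt // mem_nth.
Qed.

Section Occurrences.
Variables (pat : seq nat) (x : seq int) (j : nat).
Hypothesis occ : occurs pat x j.

Let window := take (size pat) (drop j x).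

Let size_window : size window = size pat.
Proof. by rewrite -[in RHS](eqP occ) size_map. Qed.

Let nth_window i : (i < size pat)%N -> nth 0 window i = nth 0 x (i + j).
Proof. by move=> lt_i; rewrite nth_take // nth_drop addnC. Qed.

Lemma occurs_size : (0 < size pat)%N -> (j + size pat <= size x)%N.
Proof. by move: size_window; rewrite size_take_min size_drop; lia. Qed.

Lemma occurs_lt i1 i2 : (i1 < size pat)%N -> (i2 < size pat)%N ->
  (nth 0%N pat i1 < nth 0%N pat i2)%N -> nth 0 x (i1 + j) < nth 0 x (i2 + j).
Proof.
move=> lt_i1 lt_i2; rewrite -!nth_window // -(eqP occ).
by apply: lt_nth_red; rewrite size_window.
Qed.

Lemma occurs_eq i1 i2 : (i1 < size pat)%N -> (i2 < size pat)%N ->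
  nth 0%N pat i1 = nth 0%N pat i2 -> nth 0 x (i1 + j) = nth 0 x (i2 + j).
Proof.
move=> lt_i1 lt_i2; rewrite -!nth_window // -(eqP occ).
by apply: eq_nth_red; rewrite size_window.
Qed.

End Occurrences.

Lemma eq_occurs pat x y j : size x = size y ->
    (forall i, (i < size pat)%N -> nth 0 x (i + j) = nth 0 y (i + j)) ->
  occurs pat x j = occurs pat y j.
Proof.
move=> eq_size eq_window; rewrite /occurs; congr (red _ == _).
apply: (@eq_from_nth _ 0); first by rewrite !size_take !size_drop eq_size.
move=> i; rewrite size_take_min size_drop => lt_i.
have lt_ip : (i < size pat)%N by lia.
by rewrite !nth_take // !nth_drop addnC eq_window.
Qed.

Definition occ_pq (x : seq int) (j : nat) := occurs pat_p x j || occurs pat_q x j.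

Lemma occ_pq_order x j : occ_pq x j ->
  [/\ (j.+3 < size x)%N, nth 0 x j < nth 0 x j.+1, nth 0 x j.+2 <= nth 0 x j.+1,
      nth 0 x j.+2 < nth 0 x j.+3 & nth 0 x j.+1 < nth 0 x j.+3].
Proof.
case/orP=> occ; have /= := occurs_size occ isT => size_x.
all: split; [lia | exact: (occurs_lt (i1 := 0) (i2 := 1) occ) | |
             exact: (occurs_lt (i1 := 2) (i2 := 3) occ) |
             exact: (occurs_lt (i1 := 1) (i2 := 3) occ)].
  exact: ltW (occurs_lt (i1 := 2) (i2 := 1) occ isT isT isT).
by rewrite [nth _ _ j.+2](occurs_eq (i1 := 2) (i2 := 1) occ).
Qed.

Section AlgorithmA.
Variable e : seq int.
Local Notation e_ i := (nth 0 e i).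

Definition cur k := (stateA e k).1.
Definition lastA k := (stateA e k).2.

Definition fires m := (2 <= m)%N && (occ_pq e (m - 2) || occ_pq (cur m) (m - 2)).

Definition written m :=
  if occurs pat_p e (m - 2) then nth 0 (cur m) m.-1
  else if occurs pat_q e (m - 2) then nth 0 (cur m) (m - 2)
  else odflt (nth 0 (cur m) m) (lastA m).

Definition settled m := nth 0 (cur m.+1) m.

Lemma stateAS k : stateA e k.+1 =
  if fires k then (set_nth 0 (cur k) k (written k), Some (nth 0 (cur k) k))
  else stateA e k.
Proof.
rewrite /stateA -addn1 iotaD foldl_cat add0n /= -/(stateA e k).
rewrite /fires /written /cur /lastA /occ_pq; case: (stateA e k) => s l /=.
by case: (2 <= k)%N; case: occurs; case: occurs => //=; case: (_ || _).
Qed.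

Lemma curS k :
  cur k.+1 = if fires k then set_nth 0 (cur k) k (written k) else cur k.
Proof. by rewrite /cur stateAS; case: fires. Qed.

Lemma lastAS k : lastA k.+1 = if fires k then Some (nth 0 (cur k) k) else lastA k.
Proof. by rewrite /lastA stateAS; case: fires. Qed.

Lemma nth_curS k m : m != k -> nth 0 (cur k.+1) m = nth 0 (cur k) m.
Proof.
move=> /negbTE ne_mk; rewrite curS.
by case: fires; rewrite ?nth_set_nth /= ?ne_mk.
Qed.

Lemma nth_cur k m : nth 0 (cur k) m = if (m < k)%N then settled m else e_ m.
Proof.
elim: k => [//|k IHk]; have [->|ne_mk] := eqVneq m k; first by rewrite ltnSn.
by rewrite nth_curS // IHk ltnS [(m <= k)%N]leq_eqVlt (negbTE ne_mk).
Qed.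

Lemma nth_cur_lt k m : (m < k)%N -> nth 0 (cur k) m = settled m.
Proof. by rewrite nth_cur => ->. Qed.

Lemma nth_cur_ge k m : (k <= m)%N -> nth 0 (cur k) m = e_ m.
Proof. by rewrite nth_cur ltnNge => ->. Qed.

Lemma settled_fires m : fires m -> settled m = written m.
Proof. by move=> fm; rewrite /settled curS fm nth_set_nth /= eqxx. Qed.

Lemma settled_idle m : ~~ fires m -> settled m = e_ m.
Proof. by move=> /negbTE fm; rewrite /settled curS fm nth_cur_ge. Qed.

Lemma nth_cur_idle k m : ~~ fires m -> nth 0 (cur k) m = e_ m.
Proof. by move=> fm; rewrite nth_cur settled_idle // if_same. Qed.

Lemma firesSS n : fires n.+2 = occ_pq e n || occ_pq (cur n.+2) n.
Proof. by rewrite /fires subn2. Qed.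

Lemma fires_ge2 m : fires m -> exists n, m = n.+2.
Proof. by case: m => [|[|n]] // _; exists n. Qed.

Lemma size_cur k : size (cur k) = size e.
Proof.
elim: k => [//|k IHk]; rewrite curS; case: ifP => // fk.
have [n Ekn] := fires_ge2 fk; subst k; rewrite size_set_nth IHk; apply/maxn_idPr.
move: fk; rewrite firesSS => /orP[] /occ_pq_order[+ _ _ _ _].
all: by rewrite ?IHk => /ltnW.
Qed.

Lemma fires_lt m : fires m -> e_ m < e_ m.+1.
Proof.
move=> fm; have [n Em] := fires_ge2 fm; subst m.
move: fm; rewrite firesSS => /orP[] /occ_pq_order[_ _ _ lt23 _] //.
by rewrite !nth_cur_ge in lt23.
Qed.

Lemma occ_pq_cur_eq n : ~~ fires n -> ~~ fires n.+1 ->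
  occ_pq (cur n.+2) n = occ_pq e n.
Proof.
move=> idle0 idle1.
have eq_window i : (i < 4)%N -> nth 0 (cur n.+2) (i + n) = e_ (i + n).
  move=> lt_i4; rewrite nth_cur; case: ltnP => // lt_in2.
  have [->|->] : i = 0 \/ i = 1 by lia.
    by rewrite settled_idle.
  by rewrite settled_idle.
by rewrite /occ_pq !(eq_occurs (pat := pat_p) (size_cur _) eq_window)
  !(eq_occurs (pat := pat_q) (size_cur _) eq_window).
Qed.

Lemma written_swap_lt n : ~~ occ_pq e n -> occ_pq (cur n.+2) n ->
    (fires n.+1 -> settled n.+1 < e_ n.+2) ->
  odflt (e_ n.+2) (lastA n.+2) < e_ n.+3.
Proof.
move=> occNe occ_cur IH1; have [_ _ le21 _ lt13] := occ_pq_order occ_cur.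
rewrite (nth_cur_lt (m := n.+1)) // (nth_cur_ge (m := n.+2)) // in le21.
rewrite (nth_cur_lt (m := n.+1)) // (nth_cur_ge (m := n.+3)) // in lt13.
have idle1 : ~~ fires n.+1.
  by apply/negP=> /IH1 lt12; move: le21; rewrite lt_geF.
have fires0 : fires n.
  apply/negPn/negP=> idle0.
  by move: occ_cur; rewrite occ_pq_cur_eq // (negbTE occNe).
rewrite lastAS (negbTE idle1) lastAS fires0 nth_cur_ge //=.
by rewrite (lt_trans (fires_lt fires0)) // -(settled_idle idle1).
Qed.

Lemma settled_lt_next m : fires m -> settled m < e_ m.+1.
Proof.
elim/ltn_ind: m => m IH fm; have [n Em] := fires_ge2 fm; subst m.
rewrite settled_fires // /written subn2 /=.
case: ifP => [occ_p | occ_pN].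
  have /occ_pq_order[_ _ le21 _ lt13] : occ_pq e n by rewrite /occ_pq occ_p.
  have idle1 : ~~ fires n.+1 by apply/negP=> /fires_lt; rewrite ltNge le21.
  by rewrite nth_cur_lt // settled_idle.
case: ifP => [occ_q | occ_qN].
  have /occ_pq_order[_ lt01 _ _ lt13] : occ_pq e n by rewrite /occ_pq occ_q orbT.
  rewrite nth_cur_lt //; apply: lt_trans lt13.
  have [fires0 | idle0] := boolP (fires n); first exact: IH.
  by rewrite settled_idle.
have occNe : ~~ occ_pq e n by rewrite /occ_pq occ_pN occ_qN.
move: fm; rewrite firesSS (negbTE occNe) => occ_cur.
by rewrite nth_cur_ge // written_swap_lt // => /IH; apply.
Qed.

Lemma fires_succN m : fires m -> ~~ fires m.+1.
Proof.
move=> fm; have [n Em] := fires_ge2 fm; subst m.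
rewrite firesSS negb_or; apply/andP.
split; apply/negP=> /occ_pq_order[_ _ le21 _ _].
  by move: le21; rewrite lt_geF // fires_lt.
rewrite nth_cur_ge // nth_cur_lt // in le21.
by move: le21; rewrite lt_geF // settled_lt_next.
Qed.

Lemma occ_pq_cur_idle1 k j : occ_pq (cur k) j -> (j.+1 < k)%N -> ~~ fires j.+1.
Proof.
move=> /occ_pq_order[_ _ le21 _ _] lt_j1k; apply/negP=> fires1.
move: le21; rewrite (nth_cur_lt lt_j1k) (nth_cur_idle _ (fires_succN fires1)).
by rewrite lt_geF // settled_lt_next.
Qed.

Lemma occ_pq_cur_idle3 k j : occ_pq (cur k) j -> (j.+3 < k)%N -> ~~ fires j.+3.
Proof.
move=> occ lt_j3k; apply/negP=> fires3.
have idle1 : ~~ fires j.+1 by apply: occ_pq_cur_idle1 occ _; lia.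
have idle2 : ~~ fires j.+2 by apply: contraL fires3; apply: fires_succN.
have [_ _ le21 _ _] := occ_pq_order occ; rewrite !nth_cur_idle // in le21.
move: fires3; rewrite firesSS => /orP[] /occ_pq_order[_ lt12 _ _ _].
all: by move: le21; rewrite ?nth_cur_idle // in lt12 *; rewrite lt_geF.
Qed.

Lemma nth_cur_occ_pq k j : occ_pq (cur k) j ->
  nth 0 (cur k) j.+1 = e_ j.+1 /\ nth 0 (cur k) j.+3 = e_ j.+3.
Proof.
move=> occ; split; rewrite nth_cur; case: ltnP => // lt_k.
  by rewrite settled_idle // (occ_pq_cur_idle1 occ).
by rewrite settled_idle // (occ_pq_cur_idle3 occ).
Qed.

End AlgorithmA.

Theorem lemma3 (e : seq int) (k j : nat) :
  (k <= size e)%N ->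
  occurs pat_p (stateA e k).1 j || occurs pat_q (stateA e k).1 j ->
  nth 0%R (stateA e k).1 j.+1 = nth 0%R e j.+1 /\
  nth 0%R (stateA e k).1 j.+3 = nth 0%R e j.+3.
Proof.
(* steps beyond position size e - 2 never fire, so k needs no bound *)
by move=> _; apply: nth_cur_occ_pq.
Qed.
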